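(* Let $K$ be a field and let $f\colon\mathbb Z^k\to K$ be a hypergeometric term on $\mathbb Z^k$. Then either $f$ is a zero divisor, or $f$ is nonzero on arbitrarily large $k$-dimensional boxes, i.e. for every $n\ge0$ there is a $k$-dimensional box of size $n$ at every point of which $f$ is nonzero.
   Context: A hypergeometric term on $\mathbb Z^k$ over $K$ is a function $f\colon\mathbb Z^k\to K$ such that for each $i\in\{1,\dots,k\}$ there are nonzero polynomials $A_i,B_i\in K[\vec z]$ with $A_i(\vec z)f(\vec z)=B_i(\vec z)f(\vec z+\vec e_i)$ for all $\vec z\in\mathbb Z^k$. $f$ is a zero divisor if there is a nonzero polynomial $p$ with $p(\vec z)f(\vec z)=0$ for all $\vec z$. A $k$-dimensional box of size $n$ is $\{\vec z\in\mathbb Z^k: c_i\le z_i\le c_i+n,\ i=1,\dots,k\}$ for some $c_i\in\mathbb Z$. *)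

From HB Require Import structures.
From mathcomp Require Import all_boot all_order all_algebra.
From mathcomp Require Import mpoly.
Set Implicit Arguments. Unset Strict Implicit. Unset Printing Implicit Defensive.
Import Order.TTheory GRing.Theory Num.Theory.
Local Open Scope ring_scope.

Definition pt (k : nat) := 'I_k -> int.

Definition ptK (K : fieldType) (k : nat) (z : pt k) : 'I_k -> K :=
  fun j => (z j)%:~R.

Definition shift (k : nat) (z : pt k) (i : 'I_k) : pt k :=
  fun j => z j + (j == i)%:Z.

Definition hypergeometric (K : fieldType) (k : nat) (f : pt k -> K) : Prop :=
  forall i : 'I_k, exists A B : {mpoly K[k]},
    A != 0 /\ B != 0 /\
    forall z : pt k, A.@[ptK K z] * f z = B.@[ptK K z] * f (shift z i).

Definition zero_divisor (K : fieldType) (k : nat) (f : pt k -> K) : Prop :=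
  exists p : {mpoly K[k]}, p != 0 /\ forall z : pt k, p.@[ptK K z] * f z = 0.

Definition in_box (k : nat) (c : pt k) (n : nat) (z : pt k) : Prop :=
  forall i : 'I_k, c i <= z i <= c i + n%:Z.

Definition nonzero_on_large_boxes (K : fieldType) (k : nat) (f : pt k -> K) : Prop :=
  forall n : nat, exists c : pt k, forall z : pt k, in_box c n z -> f z != 0.

(** Pick nonzero polynomials A_i with A_i(z) f(z) = B_i(z) f(z + e_i).  The
    product Q of all translates A_i(x + w), w ranging over the offsets of a box
    of size n, is a nonzero polynomial, so if f is not a zero divisor there is a
    point c with Q(c) f(c) <> 0.  Then f(c) <> 0 and no A_i vanishes on the box
    cornered at c, and walking from c through the box along unit steps, the
    recurrence keeps f nonzero. *)

From mathcomp Require Import all_boot all_order all_algebra.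
From mathcomp Require Import mpoly zify.
From Stdlib Require Import Classical FunctionalExtensionality.
Set Implicit Arguments. Unset Strict Implicit. Unset Printing Implicit Defensive.
Import GRing.Theory Num.Theory.
Local Open Scope ring_scope.

Section MpolyTranslate.
Variables (K : fieldType) (k : nat).

Definition mpoly_translate (c : 'I_k -> K) : k.-tuple {mpoly K[k]} :=
  [tuple 'X_i + (c i)%:MP | i < k].

Lemma meval_translate (p : {mpoly K[k]}) c v :
  (p \mPo mpoly_translate c).@[v] = p.@[fun i => v i + c i].
Proof.
rewrite comp_mpoly_meval; apply: meval_eq => i.
by rewrite tnth_mktuple mevalD mevalXU mevalC.
Qed.

Lemma comp_mpolyA (p : {mpoly K[k]}) (t t' : k.-tuple {mpoly K[k]}) :
  (p \mPo t) \mPo t' = p \mPo [tuple tnth t i \mPo t' | i < k].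
Proof.
rewrite [p \mPo t]comp_mpolyE [RHS]comp_mpolyE raddf_sum /=; apply: eq_bigr => m _.
rewrite comp_mpolyZ rmorph_prod /=; congr (_ *: _); apply: eq_bigr => i _.
by rewrite rmorphXn /= tnth_mktuple.
Qed.

Lemma comp_mpoly_translate (p : {mpoly K[k]}) c d :
  (p \mPo mpoly_translate c) \mPo mpoly_translate d
  = p \mPo mpoly_translate (fun i => c i + d i).
Proof.
rewrite comp_mpolyA; congr (p \mPo _); apply: eq_from_tnth => i.
rewrite !tnth_mktuple comp_mpolyD comp_mpolyC comp_mpolyXU -tnth_nth tnth_mktuple.
by rewrite -addrA -(mpolyCD k) (addrC (d i)).
Qed.

Lemma mpoly_translate_neq0 (p : {mpoly K[k]}) c :
  p != 0 -> p \mPo mpoly_translate c != 0.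
Proof.
apply: contraNneq => pc0.
have <- : (p \mPo mpoly_translate c) \mPo mpoly_translate (fun i => - c i) = p.
  rewrite comp_mpoly_translate -[RHS]comp_mpoly_id; congr (p \mPo _).
  by apply: eq_from_tnth => i; rewrite !tnth_mktuple subrr mpolyC0 addr0.
by rewrite pc0 comp_mpoly0.
Qed.

End MpolyTranslate.

Lemma not_zero_divisor_witness (K : fieldType) (k : nat) (f : pt k -> K) (p : {mpoly K[k]}) :
  ~ zero_divisor f -> p != 0 -> exists z, p.@[ptK K z] * f z != 0.
Proof.
move=> nzd pn0; apply: NNPP => p_ann; apply: nzd; exists p; split=> // z.
by apply: NNPP => pfz; apply: p_ann; exists z; apply/eqP.
Qed.

Lemma in_box_ind (k : nat) (c : pt k) (n : nat) (P : pt k -> Prop) :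
  P c ->
  (forall z i, in_box c n z -> in_box c n (shift z i) -> P z -> P (shift z i)) ->
  forall z, in_box c n z -> P z.
Proof.
move=> Pc Pshift z zbox.
(* Induct on the l1-distance from c, stepping back along a coordinate where z exceeds c. *)
move: {2}(\sum_j `|z j - c j|)%N (erefl (\sum_j `|z j - c j|)%N) => m.
elim: m z zbox => [|m IH] z zbox dist_z.
  suff -> : z = c by [].
  apply: functional_extensionality => j.
  move/eqP: dist_z; rewrite sum_nat_eq0 => /forallP /(_ j) /implyP /(_ isT) /eqP.
  by lia.
have [j zj_gt] : exists j, (0 < `|z j - c j|)%N.
  case: (pickP (fun j => 0 < `|z j - c j|)%N) => [j|z_eq_c]; first by exists j.
  by move: dist_z; rewrite big1 // => l _; move: (z_eq_c l) => /= /negbT; lia.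
pose z' : pt k := fun l => z l - (l == j)%:Z.
have shift_z' : shift z' j = z.
  by apply: functional_extensionality => l; rewrite /shift /z' subrK.
have z'box : in_box c n z'.
  by move=> l; move: (zbox l) (zbox j); rewrite /z'; case: (eqVneq l j) => [->|] /=; lia.
rewrite -shift_z'; apply: Pshift; rewrite ?shift_z' //; apply: IH => //.
have dist_rest : (\sum_(l | l != j) `|z' l - c l|)%N = (\sum_(l | l != j) `|z l - c l|)%N.
  by apply: eq_bigr => l jl; rewrite /z' (negbTE jl) subr0.
rewrite (bigD1 j) //= dist_rest; move: dist_z; rewrite (bigD1 j) //= /z' eqxx.
by move: zj_gt (zbox j); lia.
Qed.

Lemma in_box_offset (K : fieldType) (k : nat) (c : pt k) (n : nat) (z : pt k) :
  in_box c n z ->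
  exists w : {ffun 'I_k -> 'I_n.+1}, ptK K z =1 (fun j => ptK K c j + (w j : nat)%:R).
Proof.
move=> zbox; exists [ffun j => inord `|z j - c j|%N] => j.
rewrite ffunE inordK; last by move: (zbox j); lia.
have z_eq : z j = c j + (`|z j - c j|%N)%:Z by move: (zbox j); lia.
by rewrite /ptK {1}z_eq intrD.
Qed.

Lemma box_translates_nonvanishing (K : fieldType) (k : nat) (p : {mpoly K[k]}) (c : pt k) (n : nat) :
  (\prod_(w : {ffun 'I_k -> 'I_n.+1})
     (p \mPo mpoly_translate (fun j => (w j : nat)%:R))).@[ptK K c] != 0 ->
  forall z, in_box c n z -> p.@[ptK K z] != 0.
Proof.
rewrite rmorph_prod => /prodf_neq0 pc_box z /(in_box_offset K) [w z_eq].
by rewrite (meval_eq _ z_eq) -meval_translate; apply: pc_box.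
Qed.

Theorem lemmaB17 (K : fieldType) (k : nat) (f : pt k -> K) :
  hypergeometric f -> zero_divisor f \/ nonzero_on_large_boxes f.
Proof.
move=> /fin_all_exists [A hA].
case: (classic (zero_divisor f)) => [|nzd]; [by left | right] => n.
pose Q := \prod_(i < k) \prod_(w : {ffun 'I_k -> 'I_n.+1})
            (A i \mPo mpoly_translate (fun j => (w j : nat)%:R)).
have Qn0 : Q != 0.
  apply/prodf_neq0 => i _; apply/prodf_neq0 => w _.
  by have [_ [An0 _]] := hA i; apply: mpoly_translate_neq0.
have [c] := not_zero_divisor_witness nzd Qn0.
rewrite mulf_eq0 negb_or rmorph_prod => /andP[/prodf_neq0 Qc fc].
exists c; apply: in_box_ind => // z i zbox _ fz.
have Az : (A i).@[ptK K z] != 0 by apply: box_translates_nonvanishing zbox; apply: Qc.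
have [B [_ [_ rec]]] := hA i.
by apply: contraNneq (mulf_neq0 Az fz) => fz0; rewrite rec fz0 mulr0.
Qed.
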